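(* Let $n\ge0$ and $\gamma$ a composition of $n$. Then $$\blacktriangle(\kappa_{\mathrm{set}(\gamma)}(\nu))=\sum_{\alpha\odot\beta=\gamma}\kappa_{\mathrm{set}(\alpha)}(\nu)\otimes\kappa_{\mathrm{set}(\beta)}(\nu),$$ the sum over all pairs of compositions $(\alpha,\beta)$ (possibly empty) with $\alpha\odot\beta=\gamma$.
   Context: Fix an integer $\nu>1$; $C_\nu$ is the additive cyclic group of order $\nu$; $[a,b]=\{t\in\mathbb Z:a\le t\le b\}$ (empty if $a>b$), $[n]=[1,n]$; $Q_n(\nu)=\bigoplus_{i\in[n-1]}C_\nu$ (trivial if $n\le1$). For $K\subseteq[n-1]$, $\kappa_K(\nu)$ is the function on $Q_n(\nu)$ equal to $1$ at $\mathbf g$ if $\{i:g_i\ne0\}=K$ and $0$ otherwise (for $n\le1$, $\kappa_\emptyset(\nu)$ is the constant $1$). Compositions: for a composition $\alpha=(\alpha_1,\dots,\alpha_l)$ of $n$, $\mathrm{set}(\alpha)=\{\alpha_1,\alpha_1+\alpha_2,\dots,\alpha_1+\dots+\alpha_{l-1}\}\subseteq[n-1]$, and $\kappa_{\mathrm{set}(\alpha)}(\nu)$ lives on $Q_{|\alpha|}(\nu)$; the empty composition has size $0$ and empty set. Near-concatenation: $(\alpha_1,\dots,\alpha_l)\odot(\beta_1,\dots,\beta_k)=(\alpha_1,\dots,\alpha_l+\beta_1,\beta_2,\dots,\beta_k)$, with $\emptyset\odot\beta=\beta$ and $\alpha\odot\emptyset=\alpha$. Coproduct: for a function $\phi$ on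 $Q_n(\nu)$, $\blacktriangle_0(\phi)=1\otimes\phi$, $\blacktriangle_n(\phi)=\phi\otimes1$, and for $1\le k\le n-1$, $\blacktriangle_k(\phi)\in\mathrm{Fun}(Q_k(\nu))\otimes\mathrm{Fun}(Q_{n-k}(\nu))$ corresponds under the canonical isomorphism to $(\mathbf a,\mathbf b)\mapsto\phi(a_1,\dots,a_{k-1},0,b_1,\dots,b_{n-k-1})$; $\blacktriangle=\sum_{k=0}^n\blacktriangle_k$. *)

From HB Require Import structures.
From mathcomp Require Import all_boot all_order all_algebra.
Set Implicit Arguments. Unset Strict Implicit. Unset Printing Implicit Defensive.
Import GRing.Theory.
Local Open Scope ring_scope.

Definition is_composition (n : nat) (a : seq nat) : bool :=
  all (fun x => 0 < x)%N a && (sumn a == n).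

(* set(alpha) = {a1, a1+a2, ..., a1+...+a_{l-1}} as a list of naturals. *)
Definition setc (a : seq nat) : seq nat :=
  [seq sumn (take k a) | k <- iota 1 (size a).-1].

Definition nconcat (a b : seq nat) : seq nat :=
  match a, b with
  | [::], _ => b
  | _, [::] => a
  | _, y :: b' => belast (head 0%N a) (behead a) ++ (last 0%N a + y)%N :: b'
  end.

Fixpoint words (l bd : nat) : seq (seq nat) :=
  match l with
  | 0 => [:: [::]]
  | l'.+1 => [::] :: [seq i :: w | i <- iota 1 bd, w <- words l' bd]
  end.

Definition compositions (m : nat) : seq (seq nat) :=
  [seq s <- words m m | sumn s == m].

(* Elements of Q_n(nu) = (C_nu)^(n-1) are sequences g : seq 'I_nu of size n.-1
   (entry g_i stored at position i-1).  Functions on Q_n(nu) with values in R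
   are functions seq 'I_nu -> R (only their values on sequences of size n.-1
   matter). *)
Definition kappa (R : nzRingType) (nu n : nat) (K : seq nat) (g : seq 'I_nu) : R :=
  if all (fun j => 0 < j < n)%N K &&
     all (fun j => (nth 0 [seq val x | x <- g] j.-1 != 0)%N == (j \in K))
         (iota 1 n.-1)
  then 1 else 0.

(* k-th component of the coproduct, as a function on Q_k(nu) x Q_(n-k)(nu)
   (canonical identification Fun(Q_k) (x) Fun(Q_(n-k)) = Fun(Q_k x Q_(n-k))). *)
Definition coprod_k (R : nzRingType) (nu n k : nat) (phi : seq 'I_nu -> R)
  (Hnu : (0 < nu)%N) (a b : seq 'I_nu) : R :=
  if k == 0%N then phi b
  else if k == n then phi a
  else phi (a ++ Ordinal Hnu :: b).

Arguments kappa R nu n K g : clear implicits.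
Arguments coprod_k R nu n k phi Hnu a b : clear implicits.

From HB Require Import structures.
From mathcomp Require Import all_boot all_order all_algebra.
From mathcomp Require Import zify.
Import GRing.Theory.

(** The component [k] of the coproduct evaluates [kappa_{set gamma}] on the word
    [a 0 b], whose [k]-th letter is zero.  If [k] lies in [set gamma] this value
    is [0], and [k] is never a cut point of [alpha ⊙ beta] with [|alpha| = k], so
    the sum is empty.  Otherwise [gamma] splits as [alpha ⊙ beta] with
    [|alpha| = k]; the split is unique because
    [set gamma = set alpha ∪ (k + set beta)] recovers [set alpha] and
    [set beta], and a composition of given size is determined by its set.  The
    same decomposition of [set gamma] into its parts below and above [k] factors
    [kappa_{set gamma}(a 0 b)] as [kappa_{set alpha}(a) * kappa_{set beta}(b)]. *)

Local Open Scope nat_scope.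

Lemma mem_words l bd s :
  (s \in words l bd) = (size s <= l) && all (fun x => 0 < x <= bd) s.
Proof.
elim: l s => [|l IH] [|x s] //=; rewrite inE /=.
apply/allpairsP/andP => [[[i w] /= [+ + [-> ->]]]|[size_s /andP [x_range s_range]]].
  by rewrite mem_iota IH add1n ltnS => /andP [-> ->] /andP [? ->].
by exists (x, s); rewrite /= mem_iota IH s_range andbT add1n ltnS.
Qed.

Lemma uniq_words l bd : uniq (words l bd).
Proof.
elim: l => [|l IH] //=; apply/andP; split.
  by apply/negP => /allpairsP [[i w] [_ _]].
by apply: allpairs_uniq => [||[i w] [i' w'] _ _ /= [-> ->]] //; apply: iota_uniq.
Qed.

Lemma size_le_sumn s : all (fun x => 0 < x) s -> size s <= sumn s.
Proof. by elim: s => [|x s IH] //= /andP [x0 /IH]; lia. Qed.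

Lemma mem_compositions m s : (s \in compositions m) = is_composition m s.
Proof.
rewrite mem_filter mem_words /is_composition andbC.
have [<-|] := eqVneq (sumn s) m; last by rewrite !andbF.
rewrite !andbT; apply/andP/idP => [[_ /sub_all->] // x /andP []|s_pos] //.
split; first exact: size_le_sumn.
apply/allP => x xs; rewrite (allP s_pos) //=.
by rewrite sumnE (big_rem x) //= leq_addr.
Qed.

Lemma uniq_compositions m : uniq (compositions m).
Proof. exact/filter_uniq/uniq_words. Qed.

Lemma is_composition_nil n : is_composition n [::] = (n == 0).
Proof. by rewrite /is_composition eq_sym. Qed.

Lemma is_composition_cons n x s :
  is_composition n (x :: s) = [&& 0 < x, x <= n & is_composition (n - x) s].
Proof.
rewrite /is_composition /= -andbA; congr (_ && _); rewrite andbCA; congr (_ && _).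
apply/eqP/andP => [<-|[le_xn /eqP ->]]; first by rewrite leq_addr addKn.
exact: subnKC.
Qed.

Lemma setc_cons x s : s != [::] -> setc (x :: s) = x :: map (addn x) (setc s).
Proof.
case: s => [|y s] // _; rewrite /setc /= addn0; congr (_ :: _).
by rewrite -map_comp (iotaDl 1 1) -map_comp.
Qed.

Lemma all_setc_range [n s] : is_composition n s -> all (fun j => 0 < j < n) (setc s).
Proof.
elim: s n => [|x [|y s] IH] n // /andP [/andP [x0 ys_pos] /eqP <-].
have ys_range : all (fun j => 0 < j < sumn (y :: s)) (setc (y :: s)).
  by apply: IH; apply/andP; split.
rewrite setc_cons //= all_map x0 /=; apply/andP; split.
  by move: ys_pos => /andP [y0 _]; lia.
by apply: (sub_all _ ys_range) => j /= /andP [j0 jn]; lia.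
Qed.

Lemma nconcat_nil_r a : nconcat a [::] = a.
Proof. by case: a. Qed.

Lemma nconcat_cons x a b : a != [::] -> nconcat (x :: a) b = x :: nconcat a b.
Proof. by case: a => [|y a] //; case: b. Qed.

Lemma nconcat_eq_nil a b : (nconcat a b == [::]) = (a == [::]) && (b == [::]).
Proof. by case: a => [|x a]; case: b => [|y b] //=; case: (belast x a). Qed.

Lemma setc_nconcat a b : setc (nconcat a b) = setc a ++ map (addn (sumn a)) (setc b).
Proof.
case: a => [|x a]; first by rewrite /= (eq_map add0n) map_id.
case: b => [|z b]; first by rewrite nconcat_nil_r cats0.
elim: a x => [|y a IH] x.
  case: b => [|w b] //.
  change (nconcat _ _) with [:: x + z, w & b].
  rewrite !(@setc_cons _ (w :: b)) //= -map_comp addn0.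
  by congr (_ :: _); apply: eq_map => i /=; rewrite addnA.
rewrite nconcat_cons // setc_cons ?nconcat_eq_nil // IH (setc_cons x) //.
rewrite map_cat -map_comp cat_cons.
by congr (_ :: _ ++ _); apply: eq_map => i /=; rewrite addnA.
Qed.

Lemma notin_setc_nconcat [k m al be] :
  is_composition k al -> is_composition m be -> k \notin setc (nconcat al be).
Proof.
move=> alP beP; have /andP [_ /eqP al_sum] := alP.
rewrite setc_nconcat al_sum mem_cat negb_or; apply/andP; split; apply/negP.
  by move=> /(allP (all_setc_range alP)); rewrite ltnn andbF.
by move=> /mapP [j /(allP (all_setc_range beP)) /andP [j0 _]]; lia.
Qed.

Lemma nconcat_split [n gamma k] : is_composition n gamma -> k <= n ->
  k \notin setc gamma ->
  exists al be, [/\ is_composition k al, is_composition (n - k) be & nconcat al be = gamma].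
Proof.
have [-> gammaP _ _|k_gt0] := posnP k; first by exists [::], gamma; rewrite subn0.
elim: gamma n k k_gt0 => [|x g IH] n k k_gt0.
  by rewrite is_composition_nil => /eqP ->; rewrite leqNgt k_gt0.
rewrite is_composition_cons => /and3P [x0 le_xn gP] le_kn k_notin.
case: (ltngtP k x) => [lt_kx|lt_xk|eq_kx].
- exists [:: k], (x - k :: g); rewrite !is_composition_cons k_gt0 subn_gt0 lt_kx /=.
  have -> : n - k - (x - k) = n - x by lia.
  by rewrite subnKC ?(ltnW lt_kx) // gP subnn leqnn leq_sub2r.
- have g_ne : g != [::].
    by apply: contraTneq gP => ->; rewrite is_composition_nil; lia.
  have k'_notin : k - x \notin setc g.
    apply: contra k_notin => k'_in; rewrite setc_cons // inE; apply/orP; right.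
    by apply/mapP; exists (k - x); rewrite // subnKC // ltnW.
  have k'_gt0 : 0 < k - x by rewrite subn_gt0.
  have [al [be [alP beP <-]]] := IH _ _ k'_gt0 gP (leq_sub2r x le_kn) k'_notin.
  have al_ne : al != [::] by apply: contraTneq alP => ->; rewrite is_composition_nil; lia.
  exists (x :: al), be; rewrite nconcat_cons // is_composition_cons x0 ltnW //= alP.
  by have -> : n - k = n - x - (k - x) by lia.
- have g_nil : g = [::].
    by apply/eqP; apply: contraNT k_notin => g_ne; rewrite setc_cons // eq_kx mem_head.
  rewrite g_nil in gP *.
  by exists [:: x], [::]; rewrite eq_kx is_composition_cons x0 leqnn subnn.
Qed.

Lemma setc_inj [n s s'] :
  is_composition n s -> is_composition n s' -> setc s = setc s' -> s = s'.
Proof.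
elim: s n s' => [|x g IH] n [|x' g'] //; rewrite ?is_composition_nil ?is_composition_cons.
- by move=> /eqP-> /and3P []; lia.
- by move=> /and3P [] + + _ /eqP n0; lia.
move=> /and3P [x0 le_xn gP] /and3P [x'0 le_x'n g'P].
case: g g' IH gP g'P => [|y g] [|y' g'] IH gP g'P.
- by move: gP g'P; rewrite !is_composition_nil => /eqP ? /eqP ? _; congr [:: _]; lia.
- by rewrite (setc_cons x').
- by rewrite (setc_cons x).
rewrite (setc_cons x) // (setc_cons x') // => -[x_eq]; subst x'.
by move=> /(inj_map (@addnI x)) /(IH _ _ gP g'P) ->.
Qed.

Lemma setc_nconcat_lt [k al] be : is_composition k al ->
  [seq j <- setc (nconcat al be) | j < k] = setc al.
Proof.
move=> alP; have /andP [_ /eqP al_sum] := alP.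
have al_lt : all (fun j => j < k) (setc al).
  by apply: (sub_all _ (all_setc_range alP)) => j /andP [].
rewrite setc_nconcat al_sum filter_cat (all_filterP al_lt) filter_map.
by rewrite (@eq_filter _ _ pred0) ?filter_pred0 ?cats0 // => j /=; lia.
Qed.

Lemma setc_nconcat_gt [k m al be] : is_composition k al -> is_composition m be ->
  [seq j - k | j <- setc (nconcat al be) & k < j] = setc be.
Proof.
move=> alP beP; have /andP [_ /eqP al_sum] := alP.
rewrite setc_nconcat al_sum filter_cat (@eq_in_filter _ _ pred0) ?filter_pred0; last first.
  by move=> j /(allP (all_setc_range alP)) /=; lia.
rewrite (@eq_in_filter _ _ predT) ?filter_predT; last first.
  by move=> _ /mapP [j /(allP (all_setc_range beP)) /= j_gt0 ->]; lia.
by rewrite -map_comp (eq_map (addKn k)) map_id.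
Qed.

Lemma nconcat_compositions_inj [k m al al' be be'] :
  is_composition k al -> is_composition k al' ->
  is_composition m be -> is_composition m be' ->
  nconcat al be = nconcat al' be' -> al = al' /\ be = be'.
Proof.
move=> alP al'P beP be'P E; split.
  apply: (setc_inj alP al'P).
  by rewrite -(setc_nconcat_lt be alP) E (setc_nconcat_lt be' al'P).
apply: (setc_inj beP be'P).
by rewrite -(setc_nconcat_gt alP beP) E (setc_nconcat_gt al'P be'P).
Qed.

Section Kappa.

Variables (R : nzRingType) (nu : nat).

Definition nz_pattern (g : seq 'I_nu) : seq bool := [seq val x != 0 | x <- g].

Definition mem_pattern n (K : seq nat) : seq bool := [seq j \in K | j <- iota 1 n.-1].

Lemma kappaE n K (g : seq 'I_nu) : size g = n.-1 ->
  kappa R nu n K g =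
    if all (fun j => 0 < j < n) K && (nz_pattern g == mem_pattern n K) then 1%R else 0%R.
Proof.
move=> size_g; rewrite /kappa; congr (if _ && _ then _ else _).
have -> : nz_pattern g = [seq nth 0 (map val g) j.-1 != 0 | j <- iota 1 n.-1].
  rewrite (iotaDl 1 0) -map_comp -size_g -(size_map val).
  set vg := map val g.
  transitivity [seq y != 0 | y <- [seq nth 0 vg j | j <- iota 0 (size vg)]].
    by rewrite map_nth_iota0 // take_size -map_comp.
  by rewrite -map_comp.
by rewrite eq_map_all all_map.
Qed.

Lemma kappa0 (g : seq 'I_nu) : kappa R nu 0 [::] g = 1%R.
Proof. by []. Qed.

Lemma mem_pattern_cat k n SA SB : 0 < k < n ->
  all (fun j => 0 < j < k) SA -> all (fun j => 0 < j < n - k) SB ->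
  mem_pattern n (SA ++ map (addn k) SB) =
    mem_pattern k SA ++ false :: mem_pattern (n - k) SB.
Proof.
move=> /andP [k_gt0 lt_kn] /allP SA_range /allP SB_range.
rewrite /mem_pattern (_ : n.-1 = k.-1 + (n - k).-1.+1); last by lia.
rewrite iotaD map_cat /= add1n prednK //; congr (_ ++ _ :: _).
- apply/eq_in_map => j; rewrite mem_iota mem_cat => /andP [_ lt_j].
  have /negbTE-> : j \notin map (addn k) SB by apply/mapP => -[i _]; lia.
  by rewrite orbF.
- apply/negbTE; rewrite mem_cat negb_or; apply/andP; split; apply/negP.
    by move=> /SA_range; rewrite ltnn andbF.
  by case/mapP => i /SB_range; lia.
- rewrite -addn1 iotaDl -map_comp; apply/eq_in_map => j _ /=.
  rewrite mem_cat (mem_map (@addnI k)); case: (boolP (k + j \in SA)) => // /SA_range; lia.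
Qed.

Lemma kappa_cat k n SA SB (a b : seq 'I_nu) (x : 'I_nu) : 0 < k < n ->
  size a = k.-1 -> size b = (n - k).-1 -> val x = 0 ->
  all (fun j => 0 < j < k) SA -> all (fun j => 0 < j < n - k) SB ->
  kappa R nu n (SA ++ map (addn k) SB) (a ++ x :: b) =
    (kappa R nu k SA a * kappa R nu (n - k) SB b)%R.
Proof.
move=> kn size_a size_b x0 SA_range SB_range; have /andP [k_gt0 lt_kn] := kn.
rewrite !kappaE ?size_cat ?size_a ?size_b //=; last by lia.
rewrite mem_pattern_cat // /nz_pattern map_cat /= x0 eqseq_cat; last first.
  by rewrite size_map size_a /mem_pattern size_map size_iota.
rewrite eqseq_cons /= SA_range SB_range all_cat all_map.
have -> : all (fun j => 0 < j < n) SA.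
  by apply: (sub_all _ SA_range) => j /andP [j_gt0 lt_jk]; lia.
have -> /= : all (preim (addn k) (fun j => 0 < j < n)) SB.
  by apply: (sub_all _ SB_range) => j /andP [j_gt0 lt_j] /=; lia.
by case: (_ == _); case: (_ == _); rewrite ?mulr1 ?mulr0.
Qed.

Lemma kappa_cat_eq0 k n K (a b : seq 'I_nu) (x : 'I_nu) : 0 < k < n ->
  size a = k.-1 -> val x = 0 -> k \in K -> kappa R nu n K (a ++ x :: b) = 0%R.
Proof.
move=> /andP [k_gt0 lt_kn] size_a x0 kK; rewrite /kappa; case: ifP => // /andP [_ /allP].
have k_in : k \in iota 1 n.-1 by rewrite mem_iota; lia.
by move=> /(_ k k_in); rewrite map_cat nth_cat size_map size_a ltnn subnn /= x0 kK.
Qed.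

End Kappa.

Local Open Scope ring_scope.

Lemma big_seq_pred1_pair (V : nmodType) (I J : eqType) (r : seq I) (s : seq J)
    (P : I -> J -> bool) (F : I -> J -> V) i0 j0 :
  uniq r -> uniq s -> i0 \in r -> j0 \in s ->
  {in r & s, forall i j, P i j = (i == i0) && (j == j0)} ->
  \sum_(i <- r) \sum_(j <- s | P i j) F i j = F i0 j0.
Proof.
move=> r_uniq s_uniq r_i0 s_j0 PE.
rewrite (bigD1_seq i0) //= [X in _ + X]big1_seq ?addr0 => [|i /andP [i_neq r_i]];
  last first.
  by rewrite big1_seq // => j /andP [+ s_j]; rewrite PE // (negbTE i_neq).
rewrite big_mkcond (bigD1_seq j0) //= PE // !eqxx big1_seq ?addr0 // => j /andP [j_neq s_j].
by rewrite PE // (negbTE j_neq) andbF.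
Qed.

Lemma big_compositions_nconcat {V : nmodType} (F : seq nat -> seq nat -> V)
    [k m al be gamma] :
  is_composition k al -> is_composition m be -> nconcat al be = gamma ->
  \sum_(alpha <- compositions k) \sum_(beta <- compositions m | nconcat alpha beta == gamma)
    F alpha beta = F al be.
Proof.
move=> alP beP <-; apply: big_seq_pred1_pair; rewrite ?uniq_compositions //;
  rewrite ?mem_compositions // => alpha beta.
rewrite !mem_compositions => alphaP betaP; apply/eqP/andP => [|[/eqP-> /eqP->]] //.
by move=> /(nconcat_compositions_inj alphaP alP betaP beP) [-> ->].
Qed.

Theorem proposition3p17 (R : comNzRingType) (nu : nat) (Hnu : (1 < nu)%N)
  (n : nat) (gamma : seq nat) :
  is_composition n gamma ->
  forall k : nat, (k <= n)%N ->
  forall a b : seq 'I_nu, size a = k.-1 -> size b = (n - k).-1 ->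
  coprod_k R nu n k (kappa R nu n (setc gamma)) (ltnW Hnu) a b
  = \sum_(alpha <- compositions k) \sum_(beta <- compositions (n - k)
          | nconcat alpha beta == gamma)
      kappa R nu k (setc alpha) a * kappa R nu (n - k) (setc beta) b.
Proof.
move=> gammaP k le_kn a b size_a size_b; rewrite /coprod_k.
have [-> | k_gt0] := posnP k.
  by rewrite subn0 (big_compositions_nconcat _ (al := [::]) _ gammaP) // kappa0 mul1r.
have [-> | k_neq_n] := eqVneq k n.
  rewrite subnn (big_compositions_nconcat _ gammaP (be := [::])) ?nconcat_nil_r //.
  by rewrite kappa0 mulr1.
have kn : (0 < k < n)%N by rewrite k_gt0 ltn_neqAle k_neq_n.
have [k_notin | /negbNE k_in] := boolP (k \notin setc gamma).
  have [al [be [alP beP gamma_eq]]] := nconcat_split gammaP le_kn k_notin.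
  rewrite (big_compositions_nconcat _ alP beP gamma_eq) -gamma_eq setc_nconcat.
  have /andP [_ /eqP ->] := alP.
  by rewrite kappa_cat // all_setc_range.
rewrite (@kappa_cat_eq0 _ _ k) // big1_seq // => al /andP [_].
rewrite mem_compositions => alP.
rewrite big1_seq // => be /andP [/eqP gamma_eq]; rewrite mem_compositions => beP.
by have := notin_setc_nconcat alP beP; rewrite gamma_eq k_in.
Qed.
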